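(* Let $(G,+)$ be an abelian group with identity $0$. Let $M$ be a matroid over $G$ and let $N$ be a paving matroid over $G$, both of rank $n$, such that $|E(M)|=|E(N)|=n+1<p(G)$. Assume there exists a total order $\preceq$ on $E(M)\cup E(N)\cup (E(M)+E(N))\cup\{0\}$ that is compatible with the group structure of $G$, such that $E(M)$ and $E(N)$ are both positive, and $\max(E(M))\notin E(M)+E(N)$. Then $M$ is matched to $N$.
   Context: $p(G)$ denotes the smallest cardinality of a nonzero subgroup of $G$. $A+B=\{a+b: a\in A, b\in B\}$. A total order $\preceq$ on a subset $A\subseteq G$ is compatible with the group structure if for all $a,b,c\in A$, $a\preceq b$ implies $a+c\preceq b+c$. With respect to such an order on a set containing $0$, an element $x$ is positive if $0\prec x$ (i.e. $0\preceq x$ and $x\ne 0$), and a set is positive if all its elements are positive. A matroid over $G$ is a matroid $M$ whose finite ground set $E(M)$ is a subset of $G$; all matroids are assumed loopless. A matroid of rank $n$ is paving if every $(n-1)$-element subset of its ground set is independent. For matroids $M,N$ over $G$ with $r(M)=r(N)=n>0$ and bases $\mathcal{M}=\{a_1,\dots,a_n\}$ of $M$ and $\mathcal{N}=\{b_1,\dots,b_n\}$ of $N$, $\mathcal{M}$ is matched to $\mathcal{N}$ if there is a permutation $\pi\in S_n$ with $a_i+b_{\pi(i)}\notin E(M)$ for all $i$. $M$ is matched to $N$ if for every basis $\mathcal{M}$ of $M$ there exists a basis $\mathcal{N}$ of $N$ such that $\mathcal{M}$ is matched to $\mathcal{N}$. *)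

From HB Require Import structures.
From mathcomp Require Import all_boot all_order all_algebra.
From mathcomp Require Import finmap.
Set Implicit Arguments. Unset Strict Implicit. Unset Printing Implicit Defensive.
Import GRing.Theory.
Local Open Scope fset_scope.
Local Open Scope ring_scope.

(* p(G) : smallest cardinality of a nonzero subgroup of G.                 *)
(* [lt_pG G k] means  k < p(G) , i.e. every nonzero subgroup of G has more *)
(* than k elements (cannot be covered by a list of k elements).            *)
Definition is_subgroup (G : zmodType) (H : G -> Prop) : Prop :=
  [/\ H 0, (forall x y, H x -> H y -> H (x + y)) & (forall x, H x -> H (- x))].

Definition lt_pG (G : zmodType) (k : nat) : Prop :=
  forall H : G -> Prop, is_subgroup H -> (exists x, H x /\ x <> 0) ->
    ~ (exists s : seq G, (size s <= k)%N /\ forall x, H x -> x \in s).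

Record matroid (G : zmodType) := Matroid {
  ground : {fset G};
  indep : {fset G} -> bool;
  indep_sub : forall A, indep A -> A `<=` ground;
  indep0 : indep fset0;
  indep_hered : forall A B, A `<=` B -> indep B -> indep A;
  indep_aug : forall A B, indep A -> indep B -> (#|` A| < #|` B|)%N ->
     exists2 x, x \in B `\` A & indep (x |` A)
}.

Definition loopless (G : zmodType) (M : matroid G) : Prop :=
  forall x, x \in ground M -> indep M [fset x].

Definition has_rank (G : zmodType) (M : matroid G) (n : nat) : Prop :=
  (exists2 B, indep M B & #|` B| = n) /\
  (forall A, indep M A -> (#|` A| <= n)%N).

Definition basis (G : zmodType) (M : matroid G) (B : {fset G}) : Prop :=
  indep M B /\ (forall A, indep M A -> B `<=` A -> A = B).

Definition paving (G : zmodType) (M : matroid G) (n : nat) : Prop :=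
  has_rank M n /\
  forall A, A `<=` ground M -> #|` A| = n.-1 -> indep M A.

(* basis BM = {a_1..a_n} is matched to BN = {b_1..b_n} (w.r.t. E(M)):
   some listing s of BN, i.e. (b_pi(1), ..., b_pi(n)), satisfies
   a_i + b_pi(i) \notin E(M) for all i. *)
Definition bases_matched (G : zmodType) (M : matroid G) (BM BN : {fset G}) : Prop :=
  exists s : seq G, perm_eq s (enum_fset BN) /\
    all2 (fun a b => a + b \notin ground M) (enum_fset BM) s.

Definition matched_to (G : zmodType) (M N : matroid G) : Prop :=
  forall BM, basis M BM -> exists2 BN, basis N BN & bases_matched M BM BN.

Definition in_sumset (G : zmodType) (A B : {fset G}) (x : G) : Prop :=
  exists a b, [/\ a \in A, b \in B & x = a + b].

Definition order_dom (G : zmodType) (M N : matroid G) (x : G) : Prop :=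
  [\/ x \in ground M, x \in ground N, in_sumset (ground M) (ground N) x | x = 0].

Definition total_order_on (G : zmodType) (S : G -> Prop) (le : G -> G -> bool) : Prop :=
  [/\ (forall x, S x -> le x x),
      (forall x y, S x -> S y -> le x y -> le y x -> x = y),
      (forall x y z, S x -> S y -> S z -> le x y -> le y z -> le x z)
    & (forall x y, S x -> S y -> le x y || le y x)].

Definition compatible_on (G : zmodType) (S : G -> Prop) (le : G -> G -> bool) : Prop :=
  forall a b c, S a -> S b -> S c -> S (a + c) -> S (b + c) ->
    le a b -> le (a + c) (b + c).

Definition positive_el (G : zmodType) (le : G -> G -> bool) (x : G) : Prop :=
  le 0 x /\ x <> 0.

From HB Require Import structures.
From mathcomp Require Import all_boot all_order all_algebra.
From mathcomp Require Import finmap zify.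
Set Implicit Arguments. Unset Strict Implicit. Unset Printing Implicit Defensive.
Import GRing.Theory.
Local Open Scope fset_scope.

(* Let m be the maximum of E(M).  For a in E(M) and b in E(N), positivity of b
   and compatibility give a < a + b, and a + b <> m since m is not in
   E(M) + E(N).  So for a in a basis BM of M, the b in a basis B of N with
   a + b in E(M) inject into the elements of E(M) other than m lying above a;
   as E(M) has a single element outside BM, there are at most as many of these
   as elements of BM above a.  Matching the elements of BM in increasing order
   then always leaves a partner b with a + b outside E(M). *)

Lemma count_le_inj (T U : eqType) (P : pred T) (Q : pred U) (f : T -> U)
    (s : seq T) (t : seq U) :
  uniq s -> injective f -> {in s, forall x, P x -> f x \in t /\ Q (f x)} ->
  (count P s <= count Q t)%N.
Proof.
move=> uniq_s inj_f fPQ; rewrite -!size_filter -(size_map f).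
apply: uniq_leq_size; first by rewrite (map_inj_uniq inj_f) filter_uniq.
move=> y /mapP[x]; rewrite mem_filter => /andP[Px xs] ->.
by have [ft Qf] := fPQ x xs Px; rewrite mem_filter Qf ft.
Qed.

Lemma count_subset_le (T : eqType) (P : pred T) (s1 s2 : seq T) :
  uniq s1 -> {subset s1 <= s2} ->
  (count P s2 <= count P s1 + (size s2 - size s1))%N.
Proof.
move=> uniq_s1 sub12.
have : (count (predC P) s1 <= count (predC P) s2)%N.
  by apply: (count_le_inj (f := id)) => // x xs1 nPx; rewrite sub12.
by have := count_predC P s1; have := count_predC P s2; lia.
Qed.

Lemma ex_minimal (T : eqType) (lt : rel T) (s : seq T) :
  {in s, forall x, ~~ lt x x} ->
  {in s & s & s, forall x y z, lt x y -> lt y z -> lt x z} ->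
  s != [::] -> exists2 x, x \in s & {in s, forall y, ~~ lt y x}.
Proof.
elim: s => [//|x s IH] irr tr _.
have sub : {subset s <= x :: s} by move=> y ys; rewrite inE ys orbT.
have xs : x \in x :: s by rewrite inE eqxx.
have [-> | s_nil] := eqVneq s [::].
  exists x; first by rewrite mem_seq1.
  by move=> y; rewrite mem_seq1 => /eqP ->; apply: irr.
have [||m ms min_m] := IH _ _ s_nil.
- by move=> y /sub; apply: irr.
- by move=> y z w /sub ? /sub ? /sub ?; apply: tr.
have [lt_xm | not_lt_xm] := boolP (lt x m).
  exists x => // y; rewrite inE => /predU1P[-> | ys]; first exact: irr xs.
  by apply: contra (min_m y ys) => /tr; apply; rewrite ?xs ?sub.
exists m; first exact: sub.
by move=> y; rewrite inE => /predU1P[-> | /min_m].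
Qed.

Lemma greedy_matching (T : eqType) (lt bad : rel T) (A B : seq T) :
  uniq A -> uniq B -> size A = size B ->
  {in A, forall x, ~~ lt x x} ->
  {in A & A & A, forall x y z, lt x y -> lt y z -> lt x z} ->
  {in A, forall a, count (bad a) B <= count (lt a) A}%N ->
  exists f : T -> T, [/\ {in A &, injective f}, {in A, forall a, f a \in B}
                       & {in A, forall a, ~~ bad a (f a)}].
Proof.
have [k] := ubnP (size A); elim: k A B => // k IH A B.
move=> szA uA uB eq_sz irr tr few_bad.
have [-> | A_nil] := eqVneq A [::]; first by exists id.
(* Matching a minimal a0 first does not decrease [count (lt a) A] for the other a. *)
have [a0 a0A min_a0] := ex_minimal irr tr A_nil.
have /hasP[b0 b0B good_b0] : has (predC (bad a0)) B.
  rewrite has_count.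
  have := few_bad a0 a0A; have := count_predC (bad a0) B.
  have : (count (predC (lt a0)) A > 0)%N.
    by rewrite -has_count; apply/hasP; exists a0 => //=; apply: irr.
  by have := count_predC (lt a0) A; lia.
have remA a : a \in rem a0 A = (a != a0) && (a \in A) by rewrite mem_rem_uniq.
have [||||||| f [inj_f f_B good_f]] := IH (rem a0 A) (rem b0 B).
- by rewrite size_rem //; move: A_nil; rewrite -size_eq0; lia.
- exact: rem_uniq.
- exact: rem_uniq.
- by rewrite !size_rem // eq_sz.
- by move=> x /mem_rem; apply: irr.
- by move=> x y z /mem_rem ? /mem_rem ? /mem_rem ?; apply: tr.
- move=> a; rewrite remA => /andP[a_a0 aA].
  rewrite !count_rem a0A (negbTE (min_a0 a aA)) subn0.
  exact: leq_trans (leq_subr _ _) (few_bad a aA).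
have f_neq_b0 x : x \in rem a0 A -> f x != b0.
  by move=> /f_B; apply: contraTneq => ->; rewrite mem_rem_uniqF.
exists (fun x => if x == a0 then b0 else f x); split.
- move=> x y xA yA /=.
  case: eqP => [-> | /eqP x_a0]; case: eqP => [-> | /eqP y_a0] //.
  + by move=> /esym /eqP; rewrite (negbTE (f_neq_b0 y _)) // remA y_a0.
  + by move=> /eqP; rewrite (negbTE (f_neq_b0 x _)) // remA x_a0.
  + by apply: inj_f; rewrite remA ?x_a0 ?y_a0.
- move=> x xA /=; case: eqP => // /eqP x_a0.
  by apply: mem_rem (f_B x _); rewrite remA x_a0.
- move=> x xA /=; case: eqP => [-> // | /eqP x_a0].
  by apply: good_f; rewrite remA x_a0.
Qed.

Lemma perm_map_inj_in (T U : eqType) (f : T -> U) (A : seq T) (B : seq U) :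
  uniq A -> uniq B -> size A = size B ->
  {in A &, injective f} -> {in A, forall a, f a \in B} -> perm_eq (map f A) B.
Proof.
move=> uA uB eq_sz inj_f f_B.
have ufA : uniq (map f A) by rewrite map_inj_in_uniq.
apply: uniq_perm => //; apply: (uniq_min_size ufA _ _).2.
  by move=> _ /mapP[a aA ->]; apply: f_B.
by rewrite size_map eq_sz.
Qed.

Lemma basis_card (G : zmodType) (M : matroid G) n B :
  has_rank M n -> basis M B -> #|` B| = n.
Proof.
move=> [[B0 B0i B0c] rk] [Bi Bmax]; apply/eqP; rewrite eqn_leq rk //= leqNgt.
apply/negP => ltB; have [x xB0 xBi] := indep_aug Bi B0i ltac:(by rewrite B0c).
by move: xB0; rewrite in_fsetD -{1}(Bmax _ xBi (fsubsetU1 x B)) fsetU11.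
Qed.

Lemma card_indep_basis (G : zmodType) (M : matroid G) n B :
  has_rank M n -> indep M B -> #|` B| = n -> basis M B.
Proof.
move=> [_ rk] Bi Bn; split=> // A Ai BA.
by apply/eqP; rewrite eq_sym eqEfcard BA Bn rk.
Qed.

Lemma bases_matched_inj (G : zmodType) (M : matroid G) (BM BN : {fset G})
    (f : G -> G) :
  #|` BM| = #|` BN| -> {in BM &, injective f} -> {in BM, forall a, f a \in BN} ->
  {in BM, forall a, (a + f a)%R \notin ground M} -> bases_matched M BM BN.
Proof.
move=> eq_card inj_f f_BN good_f; exists (map f (enum_fset BM)); split.
  exact: perm_map_inj_in (fset_uniq _) (fset_uniq _) eq_card inj_f f_BN.
rewrite all2E size_map eqxx -{1}(map_id (enum_fset BM)) zip_map /=.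
by rewrite all_map; apply/allP => a /good_f.
Qed.

Definition strict (T : eqType) (le : rel T) : rel T := fun x y => (x != y) && le x y.

Lemma strict_irr (T : eqType) (le : rel T) x : ~~ strict le x x.
Proof. by rewrite /strict eqxx. Qed.

Section TotalOrderOn.
Variables (G : zmodType) (D : G -> Prop) (le : rel G).
Hypothesis le_total : total_order_on D le.

Lemma strict_le_trans x y z :
  D x -> D y -> D z -> strict le x y -> le y z -> strict le x z.
Proof.
case: le_total => _ anti trans _ Dx Dy Dz /andP[xy le_xy] le_yz.
rewrite /strict (trans x y z) // andbT; apply/eqP => exz; subst z.
by rewrite (anti x y) ?eqxx in xy.
Qed.

Lemma strict_trans x y z :
  D x -> D y -> D z -> strict le x y -> strict le y z -> strict le x z.
Proof. by move=> Dx Dy Dz lt_xy /andP[_]; apply: strict_le_trans. Qed.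

Lemma ex_maximum (s : seq G) :
  s != [::] -> {in s, forall x, D x} -> exists2 m, m \in s & {in s, forall x, le x m}.
Proof.
move=> s_nil Ds.
have [||m ms max_m] := ex_minimal (lt := fun x y => strict le y x) _ _ s_nil.
- by move=> x _; apply: strict_irr.
- move=> x y z xs ys zs lt_yx lt_zy.
  exact: strict_trans (Ds z zs) (Ds y ys) (Ds x xs) lt_zy lt_yx.
exists m => // x xs; case: le_total => refl _ _ tot.
have /orP[// | le_mx] := tot x m (Ds x xs) (Ds m ms).
have [-> | mx] := eqVneq m x; first exact: refl (Ds x xs).
by move: (max_m x xs); rewrite /strict mx le_mx.
Qed.

End TotalOrderOn.

Local Open Scope ring_scope.

Section OrderedGroundSets.
Variables (G : zmodType) (M N : matroid G) (le : rel G).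
Hypothesis le_total : total_order_on (order_dom M N) le.
Hypothesis le_compat : compatible_on (order_dom M N) le.
Hypothesis posN : forall x, x \in ground N -> positive_el le x.

Lemma order_domM x : x \in ground M -> order_dom M N x.
Proof. by move=> xM; apply: Or41. Qed.

Lemma lt_addr a b : a \in ground M -> b \in ground N -> strict le a (a + b).
Proof.
move=> aM bN; have [le0b b_neq0] := posN bN.
apply/andP; split.
  by rewrite -{1}(addr0 a) (inj_eq (addrI a)) eq_sym; apply/eqP.
rewrite addrC -[X in le X]add0r; apply: le_compat le0b; first exact: Or44.
- exact: Or42.
- exact: order_domM.
- by rewrite add0r; apply: order_domM.
- by apply: Or43; exists a, b; rewrite addrC.
Qed.

Variable m : G.
Hypotheses (mM : m \in ground M) (m_max : forall x, x \in ground M -> le x m).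
Hypothesis m_notin_sum : ~ in_sumset (ground M) (ground N) m.

Lemma count_sum_in_ground_le (BM B : {fset G}) a :
  BM `<=` ground M -> #|` ground M| = #|` BM|.+1 -> B `<=` ground N -> a \in BM ->
  (count (fun b => (a + b)%R \in ground M) B <= count (strict le a) BM)%N.
Proof.
move=> /fsubsetP BM_M cardM /fsubsetP B_N aBM; have aM := BM_M a aBM.
have [lt_am | not_lt_am] := boolP (strict le a m); last first.
  suff : ~~ has (fun b => (a + b)%R \in ground M) B.
    by rewrite has_count -leqNgt leqn0 => /eqP ->.
  apply/hasP => -[b bB abM]; case/negP: not_lt_am.
  exact: (strict_le_trans le_total (order_domM aM) (order_domM abM) (order_domM mM)
    (lt_addr aM (B_N b bB)) (m_max abM)).
have := count_subset_le (strict le a) (fset_uniq BM) BM_M.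
have : (count (fun b => (a + b)%R \in ground M) B <=
        count (strict le a) (rem m (enum_fset (ground M))))%N.
  apply: count_le_inj (fset_uniq B) (addrI a) _ => b bB abM.
  rewrite mem_rem_uniq ?fset_uniq // inE abM andbT; split.
    by apply/eqP => abm; apply: m_notin_sum; exists a, b; rewrite abm B_N.
  exact: lt_addr aM (B_N b bB).
rewrite count_rem mM lt_am -/(#|` ground M|) -/(#|` BM|) cardM subSnn /=.
lia.
Qed.

End OrderedGroundSets.

Theorem theorem2p10 (G : zmodType) (M N : matroid G) (n : nat)
  (le : G -> G -> bool) :
  loopless M -> loopless N ->
  has_rank M n -> paving N n ->
  #|` ground M| = n.+1 -> #|` ground N| = n.+1 -> lt_pG G n.+1 ->
  total_order_on (order_dom M N) le ->
  compatible_on (order_dom M N) le ->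
  (forall x, x \in ground M -> positive_el le x) ->
  (forall x, x \in ground N -> positive_el le x) ->
  (forall m, m \in ground M -> (forall x, x \in ground M -> le x m) ->
     ~ in_sumset (ground M) (ground N) m) ->
  matched_to M N.
Proof.
move=> _ _ rkM [rkN _] cardM _ _ le_total le_compat _ posN max_notin_sum.
move=> BM basis_BM; have [[B B_indep cardB] _] := rkN.
exists B; first exact: card_indep_basis rkN B_indep cardB.
have cardBM := basis_card rkM basis_BM.
have BM_M := indep_sub basis_BM.1.
have [||m mM m_max] := ex_maximum le_total (s := enum_fset (ground M)).
- by rewrite -size_eq0 -/(#|` ground M|) cardM.
- by move=> x; apply: order_domM.
have [||| f [inj_f f_B good_f]] := greedy_matching (lt := strict le)
  (bad := fun a b => a + b \in ground M) (fset_uniq BM) (fset_uniq B)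
  (etrans cardBM (esym cardB)).
- by move=> x _; apply: strict_irr.
- move=> x y z /(fsubsetP BM_M) xM /(fsubsetP BM_M) yM /(fsubsetP BM_M) zM.
  exact: (strict_trans le_total (order_domM N xM) (order_domM N yM) (order_domM N zM)).
- move=> a; apply: (count_sum_in_ground_le le_total le_compat posN mM m_max _ BM_M
    _ (indep_sub B_indep)); first exact: max_notin_sum.
  by rewrite cardM cardBM.
exact: bases_matched_inj (etrans cardBM (esym cardB)) inj_f f_B good_f.
Qed.
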